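(* Let $\xi$ be any boundary condition, $\sigma\in\Omega^\xi$ and $x\in\Lambda$. Then: (i) $|\tau^{-1}(\sigma,x)|\in\{1,2\}$; (ii) if $\tau^{-1}(\sigma,x)=\{y_1,y_2\}$ with $y_1\neq y_2$, then $x$ is a leaf of both $\tau(\sigma,y_1)$ and $\tau(\sigma,y_2)$; (iii) if $x\in F_{\mathrm{inc}}(\sigma)$ then $|\tau^{-1}(\sigma,x)|=2$; (iv) if $\sigma_x$ is the longest edge of some triangle of $\sigma$, then $|\tau^{-1}(\sigma,x)|=1$.
   Context: Let $P$ be a lattice polygon (a simple polygon whose vertices lie in $\mathbb{Z}^2$ and whose sides contain no points of $\mathbb{Z}^2$ other than their endpoints) and let $\Lambda^0$ be the set of points of $\mathbb{Z}^2$ in $P$ (including its boundary). Edges are open straight line segments with endpoints in $\Lambda^0$; $|e|$ denotes the $\ell_1$ length of an edge $e$. A triangulation of $\Lambda^0$ is a maximal collection of pairwise disjoint edges none of which contains a point of $\Lambda^0$; all its triangles have area $1/2$, and the set $\Lambda$ of midpoints of its edges does not depend on the triangulation, so a triangulation $\sigma$ is written $\sigma=\{\sigma_x\}_{x\in\Lambda}$ with $\sigma_x$ the edge of midpoint $x$. A boundary condition $\xi$ is a set of pairwise disjoint edges containing no point of $\Lambda^0$ and containing all sides of $P$; $\Omega^\xi$ is the set of triangulations containing every edge of $\xi$. An edge $\sigma_x$ of $\sigma\in\Omega^\xi$ is flippable if $\sigma_x\notin\xi$ and the two triangles of $\sigma$ containing it form a strictly convex quadrilateral; flipping it replaces $\sigma_x$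 by the other diagonal. In each triangle of a triangulation there is a unique longest edge (in $\ell_1$ length). A unit diagonal is a diagonal of a unit square of $\mathbb{Z}^2$. $F_{\mathrm{inc}}(\sigma)$ is the set of $x$ such that $\sigma_x$ is flippable and flipping it yields a strictly longer edge. $F_{\mathrm{dec}}(\sigma)$ is the set of $x\in\Lambda$ such that $\sigma_x$ is not a unit diagonal and is the longest edge of every triangle of $\sigma$ containing it; $F_{\mathrm{diag}}(\sigma)$ is the set of $x$ such that $\sigma_x$ is a unit diagonal and is the longest edge of every triangle of $\sigma$ containing it. Tree of influence: for $x\in F_{\mathrm{dec}}(\sigma)\cup F_{\mathrm{diag}}(\sigma)$ and a triangle $\Delta$ of $\sigma$ containing $\sigma_x$, the rooted structure $\tau^\Delta(\sigma,x)$ on midpoints is built as follows: its root is $x$ and the children of $x$ are the midpoints of the other two edges of $\Delta$; inductively, for a vertex $y$ with parent $z$, let $\Delta'$ be the triangle of $\sigma$ containing $\sigma_y$ but not $\sigma_z$; if $\Delta'$ exists and $\sigma_y$ is its longest edge, the children of $y$ are the midpoints of the two other edges of $\Delta'$, otherwise $y$ has no children. $\tau(\sigma,x)$ is the union over the (one or two) triangles $\Delta$ containing $\sigma_x$ of $\tau^\Delta(\sigma,x)$, rooted at $x$ (it is a tree). For $x\in\Lambda$, $\tau^{-1}(\sigma,x)=\{z\in F_{\mathrm{dec}}(\sigma)\cup F_{\mathrm{diag}}(\sigma): x\in\tau(\sigma,z)\}$. *)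

From Stdlib Require Import ZArith Reals List Arith.
Import ListNotations.

Definition lpt := (Z * Z)%type.
Definition rpt := (R * R)%type.

Definition toR (p : lpt) : rpt := (IZR (fst p), IZR (snd p)).

Definition on_open_seg (p q z : rpt) : Prop :=
  exists t : R, (0 < t < 1)%R /\
    z = (fst p + t * (fst q - fst p), snd p + t * (snd q - snd p))%R.

Definition on_closed_seg (p q z : rpt) : Prop :=
  exists t : R, (0 <= t <= 1)%R /\
    z = (fst p + t * (fst q - fst p), snd p + t * (snd q - snd p))%R.

(** Polygon given by its cyclic list of vertices vs; side i joins
    vertex i and vertex (i+1 mod n). *)
Definition vertex (vs : list lpt) (i : nat) : lpt := nth i vs (0%Z, 0%Z).
Definition nxt (vs : list lpt) (i : nat) : nat := ((i + 1) mod (length vs))%nat.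

Definition side_seg (vs : list lpt) (i : nat) (z : rpt) : Prop :=
  on_closed_seg (toR (vertex vs i)) (toR (vertex vs (nxt vs i))) z.

Definition simple_polygon (vs : list lpt) : Prop :=
  (3 <= length vs)%nat /\ NoDup vs /\
  forall (i j : nat) (z : rpt), (i < length vs)%nat -> (j < length vs)%nat -> i <> j ->
    side_seg vs i z -> side_seg vs j z ->
    (j = nxt vs i /\ z = toR (vertex vs j)) \/ (i = nxt vs j /\ z = toR (vertex vs i)).

Definition lattice_polygon (vs : list lpt) : Prop :=
  simple_polygon vs /\
  forall (i : nat) (r : lpt), (i < length vs)%nat ->
    ~ on_open_seg (toR (vertex vs i)) (toR (vertex vs (nxt vs i))) (toR r).

(** Closed region bounded by the polygon: boundary, or odd crossing number
    of the horizontal ray to the right (half-open rule). *)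
Definition Rltb (a b : R) : bool := if Rlt_dec a b then true else false.
Definition Rleb (a b : R) : bool := if Rle_dec a b then true else false.

Definition crossb (a b z : rpt) : bool :=
  let '(ax, ay) := a in let '(bx, by_) := b in let '(zx, zy) := z in
  ((Rleb ay zy && Rltb zy by_) || (Rleb by_ zy && Rltb zy ay)) &&
  Rltb zx (ax + (zy - ay) * (bx - ax) / (by_ - ay))%R.

Definition crossing_number (vs : list lpt) (z : rpt) : nat :=
  length (filter (fun i => crossb (toR (vertex vs i)) (toR (vertex vs (nxt vs i))) z)
                 (seq 0 (length vs))).

Definition in_polygon (vs : list lpt) (z : rpt) : Prop :=
  (exists i, (i < length vs)%nat /\ side_seg vs i z) \/
  Nat.odd (crossing_number vs z) = true.

Definition Lambda0 (vs : list lpt) (r : lpt) : Prop := in_polygon vs (toR r).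

Definition edge (vs : list lpt) (p q : lpt) : Prop :=
  p <> q /\ Lambda0 vs p /\ Lambda0 vs q /\
  (forall r, Lambda0 vs r -> ~ on_open_seg (toR p) (toR q) (toR r)) /\
  (forall z, on_open_seg (toR p) (toR q) z -> in_polygon vs z).

Definition disjoint_edges (p q p' q' : lpt) : Prop :=
  ~ exists z, on_open_seg (toR p) (toR q) z /\ on_open_seg (toR p') (toR q') z.

Definition same_edge (p q p' q' : lpt) : Prop :=
  (p = p' /\ q = q') \/ (p = q' /\ q = p').

(** Sets of (unordered) edges: a predicate on ordered pairs, read up to swap. *)
Definition eset := lpt -> lpt -> Prop.
Definition inE (S : eset) (p q : lpt) : Prop := S p q \/ S q p.

Definition pairwise_disjoint (S : eset) : Prop :=
  forall p q p' q', inE S p q -> inE S p' q' -> ~ same_edge p q p' q' ->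
    disjoint_edges p q p' q'.

Definition triangulation (vs : list lpt) (sigma : eset) : Prop :=
  (forall p q, inE sigma p q -> edge vs p q) /\
  pairwise_disjoint sigma /\
  (forall p q, edge vs p q -> ~ inE sigma p q ->
     exists p' q', inE sigma p' q' /\ ~ disjoint_edges p q p' q').

Definition boundary_condition (vs : list lpt) (xi : eset) : Prop :=
  (forall p q, inE xi p q -> edge vs p q) /\
  pairwise_disjoint xi /\
  (forall i, (i < length vs)%nat -> inE xi (vertex vs i) (vertex vs (nxt vs i))).

Definition Omega (vs : list lpt) (xi sigma : eset) : Prop :=
  triangulation vs sigma /\ (forall p q, inE xi p q -> inE sigma p q).

(** Midpoints are represented with DOUBLED coordinates: mid p q = p + q. *)
Definition mid (p q : lpt) : lpt := (fst p + fst q, snd p + snd q)%Z.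

Definition Lambda (sigma : eset) (x : lpt) : Prop :=
  exists p q, inE sigma p q /\ mid p q = x.

Definition len (p q : lpt) : Z := (Z.abs (fst p - fst q) + Z.abs (snd p - snd q))%Z.

Definition det3 (a b c : lpt) : Z :=
  ((fst b - fst a) * (snd c - snd a) - (snd b - snd a) * (fst c - fst a))%Z.

(** (a,b,c) is a triangle of sigma (all triangles have area 1/2). *)
Definition tri_of (sigma : eset) (a b c : lpt) : Prop :=
  inE sigma a b /\ inE sigma b c /\ inE sigma c a /\ Z.abs (det3 a b c) = 1%Z.

Definition unit_diag_at (sigma : eset) (x : lpt) : Prop :=
  exists p q, inE sigma p q /\ mid p q = x /\
    Z.abs (fst p - fst q) = 1%Z /\ Z.abs (snd p - snd q) = 1%Z.

Definition longest_everywhere (sigma : eset) (x : lpt) : Prop :=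
  forall a b c, tri_of sigma a b c -> mid a b = x ->
    (len a b > len b c)%Z /\ (len a b > len c a)%Z.

Definition Fdec (sigma : eset) (x : lpt) : Prop :=
  Lambda sigma x /\ ~ unit_diag_at sigma x /\ longest_everywhere sigma x.

Definition Fdiag (sigma : eset) (x : lpt) : Prop :=
  Lambda sigma x /\ unit_diag_at sigma x /\ longest_everywhere sigma x.

Definition strictly_convex_quad (a b c d : lpt) : Prop :=
  ((det3 a b c > 0 /\ det3 b c d > 0 /\ det3 c d a > 0 /\ det3 d a b > 0)%Z) \/
  ((det3 a b c < 0 /\ det3 b c d < 0 /\ det3 c d a < 0 /\ det3 d a b < 0)%Z).

(** F_inc: sigma_x = ab is flippable (not in xi, its two triangles abc, abd
    form a strictly convex quadrilateral a c b d) and the flip cd is longer. *)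
Definition Finc (xi sigma : eset) (x : lpt) : Prop :=
  exists a b c d, inE sigma a b /\ mid a b = x /\ ~ inE xi a b /\
    tri_of sigma a b c /\ tri_of sigma a b d /\ c <> d /\
    strictly_convex_quad a c b d /\ (len c d > len a b)%Z.

(** Tree of influence tau(sigma, r): tnode sigma r y z means that y is a
    non-root vertex of tau(sigma, r) with parent z. *)
Inductive tnode (sigma : eset) (r : lpt) : lpt -> lpt -> Prop :=
| tn_root : forall a b c w,
    tri_of sigma a b c -> mid a b = r ->
    (w = mid b c \/ w = mid c a) -> tnode sigma r w r
| tn_step : forall y z a b c w,
    tnode sigma r y z ->
    tri_of sigma a b c -> mid a b = y ->
    ~ (z = mid a b \/ z = mid b c \/ z = mid c a) ->
    (len a b > len b c)%Z -> (len a b > len c a)%Z ->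
    (w = mid b c \/ w = mid c a) -> tnode sigma r w y.

Definition in_tau (sigma : eset) (r y : lpt) : Prop :=
  y = r \/ exists z, tnode sigma r y z.

Definition is_leaf (sigma : eset) (r y : lpt) : Prop :=
  in_tau sigma r y /\ ~ exists w, tnode sigma r w y.

Definition tau_inv (sigma : eset) (x : lpt) (z : lpt) : Prop :=
  (Fdec sigma z \/ Fdiag sigma z) /\ in_tau sigma z x.

Definition card1 (S : lpt -> Prop) : Prop := exists y, forall z, S z <-> z = y.
Definition card2 (S : lpt -> Prop) : Prop :=
  exists y1 y2, y1 <> y2 /\ forall z, S z <-> z = y1 \/ z = y2.

(* All triangles of a lattice triangulation are unimodular. Such a triangle has a unique
   longest edge in l1 length, and its opposite vertex lies in the bounding box of that
   edge. An edge that is not longest in one of its (at most two) triangles has as parent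
   the longest edge of that triangle; lengths grow strictly along parents and are bounded,
   so every x has a root above it, and x has at most two parents, hence at most two roots.
   If σ_x is longest in one of its triangles, all its parents come from the other triangle,
   so x has one parent and, inductively, one root: this gives (iv), and (ii) since a node
   with a child is longest in a triangle. For (iii), a lengthening flip keeps the midpoint,
   so σ_x is longest in neither triangle and has two parents; they lead to distinct roots
   because each τ(σ,r) is a tree: the descendants of an edge stay in its shadow, the part
   of its bounding box beyond it, and the shadows of two siblings share no segment shorter
   than their parent. *)

From Stdlib Require Import ZArith Reals Lra Lia List Bool Classical.

Open Scope Z_scope.

Lemma len_sym a b : len a b = len b a.
Proof. unfold len. lia. Qed.

Lemma mid_sym a b : mid a b = mid b a.
Proof. unfold mid. f_equal; ring. Qed.

Lemma det3_cycle a b c : det3 a b c = det3 b c a.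
Proof. unfold det3. ring. Qed.

Lemma det3_swap a b c : det3 a b c = - det3 b a c.
Proof. unfold det3. ring. Qed.

(** * Unimodular lattice triangles *)

Lemma unimodular_sign_cases (u0 u1 v0 v1 : Z) :
  Z.abs (u0 * v1 - u1 * v0) = 1 ->
  (u0 * v0 >= 0 /\ u1 * v1 >= 0) \/
  ((u0 + v0) * v0 <= 0 /\ (u1 + v1) * v1 <= 0) \/
  ((u0 + v0) * u0 <= 0 /\ (u1 + v1) * u1 <= 0).
Proof.
  intros H.
  destruct (Z.lt_trichotomy u0 0) as [?|[?|?]], (Z.lt_trichotomy u1 0) as [?|[?|?]],
    (Z.lt_trichotomy v0 0) as [?|[?|?]], (Z.lt_trichotomy v1 0) as [?|[?|?]];
    try (left; split; nia);
  destruct (Z.lt_trichotomy (u0 + v0) 0) as [?|[?|?]], (Z.lt_trichotomy (u1 + v1) 0) as [?|[?|?]];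
  first [ left; split; nia | right; left; split; nia | right; right; split; nia ].
Qed.

Lemma abs_add_same_sign (p q : Z) : p * q >= 0 -> Z.abs (p + q) = Z.abs p + Z.abs q.
Proof. nia. Qed.

(* Of the three edge vectors [u], [v], [-(u+v)] of a unimodular triangle, two lie in a
   common closed quadrant, so the l1 length of the third is the sum of theirs. *)
Lemma unimodular_l1_additive (u0 u1 v0 v1 : Z) : Z.abs (u0 * v1 - u1 * v0) = 1 ->
  Z.abs (u0 + v0) + Z.abs (u1 + v1) = (Z.abs u0 + Z.abs u1) + (Z.abs v0 + Z.abs v1) \/
  Z.abs u0 + Z.abs u1 = (Z.abs (u0 + v0) + Z.abs (u1 + v1)) + (Z.abs v0 + Z.abs v1) \/
  Z.abs v0 + Z.abs v1 = (Z.abs (u0 + v0) + Z.abs (u1 + v1)) + (Z.abs u0 + Z.abs u1).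
Proof.
  intros D.
  destruct (unimodular_sign_cases _ _ _ _ D) as [[H1 H2]|[[H1 H2]|[H1 H2]]];
    [left|right; left|right; right].
  - rewrite !abs_add_same_sign by lia; ring.
  - pose proof (abs_add_same_sign (u0 + v0) (- v0) ltac:(nia)).
    pose proof (abs_add_same_sign (u1 + v1) (- v1) ltac:(nia)).
    replace (u0 + v0 + - v0) with u0 in * by ring; replace (u1 + v1 + - v1) with u1 in * by ring.
    rewrite !Z.abs_opp in *; lia.
  - pose proof (abs_add_same_sign (u0 + v0) (- u0) ltac:(nia)).
    pose proof (abs_add_same_sign (u1 + v1) (- u1) ltac:(nia)).
    replace (u0 + v0 + - u0) with v0 in * by ring; replace (u1 + v1 + - u1) with v1 in * by ring.
    rewrite !Z.abs_opp in *; lia.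
Qed.

Lemma unimodular_nonzero (u0 u1 v0 v1 : Z) : Z.abs (u0 * v1 - u1 * v0) = 1 ->
  Z.abs u0 + Z.abs u1 >= 1 /\ Z.abs v0 + Z.abs v1 >= 1 /\ Z.abs (u0 + v0) + Z.abs (u1 + v1) >= 1.
Proof.
  intros D; split; [|split].
  - destruct (Z.eq_dec u0 0), (Z.eq_dec u1 0); [subst; discriminate D|lia..].
  - destruct (Z.eq_dec v0 0), (Z.eq_dec v1 0); [subst; rewrite !Z.mul_0_r in D; discriminate D|lia..].
  - destruct (Z.eq_dec (u0 + v0) 0), (Z.eq_dec (u1 + v1) 0); [|lia..].
    replace v0 with (- u0) in D by lia; replace v1 with (- u1) in D by lia.
    replace (u0 * - u1 - u1 * - u0) with 0 in D by ring; discriminate.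
Qed.

Lemma unimodular_strict_longest a b c : Z.abs (det3 a b c) = 1 ->
  (len a b > len b c /\ len a b > len c a) \/
  (len b c > len c a /\ len b c > len a b) \/
  (len c a > len a b /\ len c a > len b c).
Proof.
  destruct a as [a0 a1], b as [b0 b1], c as [c0 c1]; unfold det3, len; simpl; intros H.
  assert (D : Z.abs ((b0 - a0) * (c1 - b1) - (b1 - a1) * (c0 - b0)) = 1)
    by (rewrite <- H; f_equal; ring).
  pose proof (unimodular_nonzero _ _ _ _ D) as N; pose proof (unimodular_l1_additive _ _ _ _ D) as S.
  replace (c0 - a0) with (b0 - a0 + (c0 - b0)) by ring; replace (c1 - a1) with (b1 - a1 + (c1 - b1)) by ring.
  rewrite <- (Z.abs_opp (a0 - b0)), <- (Z.abs_opp (a1 - b1)), <- (Z.abs_opp (b0 - c0)),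
    <- (Z.abs_opp (b1 - c1)).
  replace (- (a0 - b0)) with (b0 - a0) by ring; replace (- (a1 - b1)) with (b1 - a1) by ring;
  replace (- (b0 - c0)) with (c0 - b0) by ring; replace (- (b1 - c1)) with (c1 - b1) by ring.
  revert N S.
  generalize (Z.abs (b0 - a0) + Z.abs (b1 - a1)), (Z.abs (c0 - b0) + Z.abs (c1 - b1)),
    (Z.abs (b0 - a0 + (c0 - b0)) + Z.abs (b1 - a1 + (c1 - b1))).
  lia.
Qed.

Definition in_box (a b p : lpt) : Prop :=
  (fst a <= fst p <= fst b \/ fst b <= fst p <= fst a) /\
  (snd a <= snd p <= snd b \/ snd b <= snd p <= snd a).

Definition shadow (e1 e2 o p : lpt) : Prop :=
  in_box e1 e2 p /\ det3 e1 e2 p * det3 e1 e2 o <= 0.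

Lemma in_box_sym a b p : in_box a b p -> in_box b a p.
Proof. unfold in_box; lia. Qed.

Lemma shadow_sym e1 e2 o p : shadow e1 e2 o p -> shadow e2 e1 o p.
Proof.
  intros [H1 H2]; split; [now apply in_box_sym|].
  rewrite (det3_swap e2 e1 p), (det3_swap e2 e1 o); nia.
Qed.

Lemma shadow_left e1 e2 o : shadow e1 e2 o e1.
Proof. split; unfold in_box, det3; [lia|]. ring_simplify; lia. Qed.

Lemma shadow_right e1 e2 o : shadow e1 e2 o e2.
Proof. split; unfold in_box, det3; [lia|]. ring_simplify; lia. Qed.

Lemma longest_apex_in_box a b t : Z.abs (det3 a b t) = 1 ->
  len a b > len b t -> len a b > len t a -> in_box a b t.
Proof.
  destruct a as [a0 a1], b as [b0 b1], t as [t0 t1]; unfold det3, len, in_box; simpl; intros; nia.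
Qed.

Lemma box_apex_unique a b t p : in_box a b t -> in_box b t p -> in_box t a p -> p = t.
Proof.
  destruct a as [a0 a1], b as [b0 b1], t as [t0 t1], p as [p0 p1]; unfold in_box; simpl.
  intros; f_equal; lia.
Qed.

(* With [D = det (V, U) = +-1], Cramer's rule writes [E = beta V + alpha U] with
   [alpha = D det (V, E) <= 0]; [E] in the box of [V] forces [beta >= 0]. *)
Lemma shadow_side_coord (U0 U1 V0 V1 E0 E1 : Z) :
  Z.abs (V0 * U1 - V1 * U0) = 1 ->
  (0 <= V0 <= U0 \/ U0 <= V0 <= 0) -> (0 <= V1 <= U1 \/ U1 <= V1 <= 0) ->
  (0 <= E0 <= V0 \/ V0 <= E0 <= 0) -> (0 <= E1 <= V1 \/ V1 <= E1 <= 0) ->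
  (V0 * E1 - V1 * E0) * (V0 * U1 - V1 * U0) <= 0 ->
  (E0 * U1 - E1 * U0) * (V0 * U1 - V1 * U0) >= 0.
Proof.
  intros HD h1 h2 h3 h4 H.
  set (D := V0 * U1 - V1 * U0) in *.
  assert (HD2 : D * D = 1) by nia.
  set (al := D * (V0 * E1 - V1 * E0)); set (be := D * (E0 * U1 - E1 * U0)).
  assert (I0 : E0 = be * V0 + al * U0) by (subst al be D; nia).
  assert (I1 : E1 = be * V1 + al * U1) by (subst al be D; nia).
  assert (Hal : al <= 0) by (subst al; nia).
  destruct (Z_lt_le_dec be 0) as [Hb|Hb]; [exfalso|subst be; nia].
  assert (V0 = 0) by (destruct h1, h3; nia).
  assert (V1 = 0) by (destruct h2, h4; nia).
  subst D; rewrite H0, H1 in HD; discriminate.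
Qed.

Lemma shadow_child_side a b t p : Z.abs (det3 a b t) = 1 ->
  len a b > len b t -> len a b > len t a -> shadow b t a p ->
  in_box a b p /\ det3 a b p * det3 a b t >= 0.
Proof.
  intros H L1 L2 [P1 P2].
  pose proof (longest_apex_in_box a b t H L1 L2) as Ht; revert H Ht P1 P2.
  destruct a as [a0 a1], b as [b0 b1], t as [t0 t1], p as [p0 p1]; unfold det3, in_box; simpl.
  intros H1 H2 H3 H4; split; [lia|].
  replace ((b0 - a0) * (p1 - a1) - (b1 - a1) * (p0 - a0))
    with ((p0 - b0) * (a1 - b1) - (p1 - b1) * (a0 - b0)) by ring.
  replace ((b0 - a0) * (t1 - a1) - (b1 - a1) * (t0 - a0))
    with ((t0 - b0) * (a1 - b1) - (t1 - b1) * (a0 - b0)) in * by ring.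
  apply (shadow_side_coord (a0 - b0) (a1 - b1) (t0 - b0) (t1 - b1) (p0 - b0) (p1 - b1)); lia.
Qed.

Lemma shadow_child_sub a b t o : Z.abs (det3 a b t) = 1 ->
  len a b > len b t -> len a b > len t a -> det3 a b o * det3 a b t < 0 ->
  forall p, shadow b t a p -> shadow a b o p.
Proof.
  intros H L1 L2 S p Hp.
  destruct (shadow_child_side a b t p H L1 L2 Hp) as [Q1 Q2]; split; [exact Q1|].
  revert H S Q2; generalize (det3 a b t), (det3 a b p), (det3 a b o); intros D P O HD.
  assert (D = 1 \/ D = -1) as [-> | ->] by lia; nia.
Qed.

Lemma multiple_of_primitive (U0 U1 V0 V1 E0 E1 : Z) :
  Z.abs (U0 * V1 - U1 * V0) = 1 -> U0 * E1 - U1 * E0 = 0 -> exists k, E0 = k * U0 /\ E1 = k * U1.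
Proof.
  intros HD H; set (D := U0 * V1 - U1 * V0) in *.
  assert (HD2 : D * D = 1) by (clear - HD; nia).
  set (k := D * (E0 * V1 - E1 * V0)); exists k; split.
  - replace E0 with (D * (D * E0)) by (rewrite Z.mul_assoc, HD2; ring).
    replace (D * E0) with ((E0 * V1 - E1 * V0) * U0 + V0 * (U0 * E1 - U1 * E0)) by (subst D; ring).
    rewrite H; subst k; ring.
  - replace E1 with (D * (D * E1)) by (rewrite Z.mul_assoc, HD2; ring).
    replace (D * E1) with ((E0 * V1 - E1 * V0) * U1 + V1 * (U0 * E1 - U1 * E0)) by (subst D; ring).
    rewrite H; subst k; ring.
Qed.

(* A unimodular triangle on [a b] makes [b - a] primitive, so [a] and [b] are the only
   lattice points of the segment. *)
Lemma box_line_endpoint a b t p :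
  in_box a b p -> det3 a b p = 0 -> Z.abs (det3 a b t) = 1 -> p = a \/ p = b.
Proof.
  destruct a as [a0 a1], b as [b0 b1], t as [t0 t1], p as [p0 p1]; unfold det3, in_box; simpl.
  intros Hb H HD.
  destruct (multiple_of_primitive (b0 - a0) (b1 - a1) (t0 - a0) (t1 - a1) (p0 - a0) (p1 - a1) HD H)
    as (k & I0 & I1).
  assert (HU : b0 - a0 <> 0 \/ b1 - a1 <> 0).
  { destruct (Z.eq_dec (b0 - a0) 0) as [E0|], (Z.eq_dec (b1 - a1) 0) as [E1|]; [|tauto..].
    rewrite E0, E1 in HD; discriminate. }
  assert (Hk : k = 0 \/ k = 1) by (destruct HU; [destruct Hb as [Hb _]|destruct Hb as [_ Hb]]; nia).
  destruct Hk as [-> | ->]; [left|right]; f_equal; lia.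
Qed.

Lemma box_line_distinct_len a b t p q : Z.abs (det3 a b t) = 1 ->
  in_box a b p -> in_box a b q -> det3 a b p = 0 -> det3 a b q = 0 -> p <> q -> len p q = len a b.
Proof.
  intros H Hp Hq Dp Dq N.
  destruct (box_line_endpoint a b t p Hp Dp H) as [-> | ->],
    (box_line_endpoint a b t q Hq Dq H) as [-> | ->]; auto using len_sym; congruence.
Qed.

Lemma zero_of_both_signs (D1 D2 P : Z) :
  Z.abs D1 = 1 -> D1 * D2 < 0 -> P * D1 >= 0 -> P * D2 >= 0 -> P = 0.
Proof. intros H; assert (D1 = 1 \/ D1 = -1) as [-> | ->] by lia; nia. Qed.

(* Unimodular triangles on opposite sides of [a b] give [c + d = a + b + k (b - a)];
   strict convexity forces [k = 0]. *)
Lemma convex_flip_same_mid a b c d : Z.abs (det3 a b c) = 1 -> Z.abs (det3 a b d) = 1 ->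
  strictly_convex_quad a c b d -> mid c d = mid a b.
Proof.
  destruct a as [a0 a1], b as [b0 b1], c as [c0 c1], d as [d0 d1];
    unfold strictly_convex_quad, det3, mid; simpl.
  set (u0 := b0 - a0); set (u1 := b1 - a1); set (v0 := c0 - a0); set (v1 := c1 - a1).
  set (w0 := d0 - a0); set (w1 := d1 - a1).
  replace (b0 - c0) with (u0 - v0) by (subst u0 v0; ring); replace (b1 - c1) with (u1 - v1) by (subst u1 v1; ring).
  replace (d0 - c0) with (w0 - v0) by (subst w0 v0; ring); replace (d1 - c1) with (w1 - v1) by (subst w1 v1; ring).
  replace (d0 - b0) with (w0 - u0) by (subst w0 u0; ring); replace (d1 - b1) with (w1 - u1) by (subst w1 u1; ring).
  replace (a0 - b0) with (- u0) by (subst u0; ring); replace (a1 - b1) with (- u1) by (subst u1; ring).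
  replace (a0 - d0) with (- w0) by (subst w0; ring); replace (a1 - d1) with (- w1) by (subst w1; ring).
  replace (c0 - d0) with (v0 - w0) by (subst w0 v0; ring); replace (c1 - d1) with (v1 - w1) by (subst w1 v1; ring).
  intros HV HW HC.
  enough (E : w0 = u0 - v0 /\ w1 = u1 - v1) by (subst u0 u1 v0 v1 w0 w1; f_equal; lia).
  clearbody u0 u1 v0 v1 w0 w1.
  set (D := u0 * v1 - u1 * v0) in *.
  assert (Ew : u0 * w1 - u1 * w0 = - D) by (subst D; nia).
  destruct (multiple_of_primitive u0 u1 v0 v1 (w0 - u0 + v0) (w1 - u1 + v1) HV ltac:(subst D; lia))
    as (k & I0 & I1).
  assert (W0 : w0 = (1 + k) * u0 - v0) by lia.
  assert (W1 : w1 = (1 + k) * u1 - v1) by lia.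
  rewrite W0, W1 in HC.
  assert (K : k = 0).
  { assert (D = 1 \/ D = -1) as [HD|HD] by (clear - HV; lia); subst D;
      replace (v0 * u1 - v1 * u0) with (- (u0 * v1 - u1 * v0)) in HC by ring;
      replace ((u0 - v0) * ((1 + k) * u1 - v1 - v1) - (u1 - v1) * ((1 + k) * u0 - v0 - v0))
        with ((k - 1) * (u0 * v1 - u1 * v0)) in HC by ring;
      replace (- ((1 + k) * u0 - v0) * (v1 - ((1 + k) * u1 - v1)) - - ((1 + k) * u1 - v1) * (v0 - ((1 + k) * u0 - v0)))
        with (- (1 + k) * (u0 * v1 - u1 * v0)) in HC by ring;
      rewrite HD in HC; lia. }
  rewrite K in W0, W1; lia.
Qed.

Lemma flip_longer_not_longest a b c d : Z.abs (det3 a b c) = 1 -> Z.abs (det3 a b d) = 1 ->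
  strictly_convex_quad a c b d -> len c d > len a b ->
  ~ (len a b > len b c /\ len a b > len c a).
Proof.
  intros Hc Hd HQ HL [L1 L2].
  pose proof (convex_flip_same_mid a b c d Hc Hd HQ) as M.
  pose proof (longest_apex_in_box a b c Hc L1 L2) as B.
  revert M B HL; destruct a as [a0 a1], b as [b0 b1], c as [c0 c1], d as [d0 d1];
    unfold mid, len, in_box; simpl; intros M B HL; injection M; lia.
Qed.

(** * Parents of an edge *)

Definition mid_injective (s : eset) : Prop :=
  forall a b a' b', inE s a b -> inE s a' b' -> mid a b = mid a' b' -> same_edge a b a' b'.

Definition one_triangle_per_side (s : eset) : Prop :=
  forall p q c d, tri_of s p q c -> tri_of s p q d -> det3 p q c = det3 p q d -> c = d.

Definition bounded_edges (s : eset) : Prop :=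
  exists B, forall a b, inE s a b -> len a b <= B.

Lemma inE_sym s a b : inE s a b -> inE s b a.
Proof. unfold inE; tauto. Qed.

Lemma tri_cycle s a b c : tri_of s a b c -> tri_of s b c a.
Proof. unfold tri_of; rewrite det3_cycle; tauto. Qed.

Lemma tri_swap s a b c : tri_of s a b c -> tri_of s b a c.
Proof.
  unfold tri_of; rewrite det3_swap, Z.abs_opp.
  intros (? & ? & ? & ?); repeat split; auto using inE_sym.
Qed.

Lemma tri_det s a b c : tri_of s a b c -> Z.abs (det3 a b c) = 1.
Proof. unfold tri_of; tauto. Qed.

Lemma tri_edge s a b c : tri_of s a b c -> inE s a b.
Proof. unfold tri_of; tauto. Qed.

Lemma tri_edge_bc s a b c : tri_of s a b c -> inE s b c.
Proof. intro H; exact (tri_edge _ _ _ _ (tri_cycle _ _ _ _ H)). Qed.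

Lemma tri_edge_ca s a b c : tri_of s a b c -> inE s c a.
Proof. intro H; exact (tri_edge_bc _ _ _ _ (tri_cycle _ _ _ _ H)). Qed.

Lemma tri_distinct s a b c : tri_of s a b c -> a <> b /\ b <> c /\ c <> a.
Proof.
  intros H; apply tri_det in H.
  repeat split; intro E; subst; unfold det3 in H; ring_simplify in H; lia.
Qed.

Record child_via (s : eset) (z y a b t : lpt) : Prop := {
  cv_tri : tri_of s a b t;
  cv_parent : mid a b = z;
  cv_longer_bt : len a b > len b t;
  cv_longer_ta : len a b > len t a;
  cv_child : mid b t = y }.

Lemma child_via_edge s z y a b t : child_via s z y a b t -> inE s b t.
Proof. intros [H _ _ _ _]; exact (tri_edge_bc _ _ _ _ H). Qed.

Lemma child_via_of_longest s a b c z y : tri_of s a b c -> mid a b = z ->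
  len a b > len b c -> len a b > len c a -> y = mid b c \/ y = mid c a ->
  exists a' b', child_via s z y a' b' c /\ same_edge a' b' a b.
Proof.
  intros H E L1 L2 [Y|Y].
  - exists a, b; split; [constructor; auto|left; auto].
  - exists b, a; split; [|right; auto].
    constructor; [now apply tri_swap|rewrite mid_sym; auto| | |rewrite mid_sym; auto];
      rewrite !(len_sym b a), ?(len_sym c b), ?(len_sym a c); lia.
Qed.

Lemma child_not_longest s z y a b t : child_via s z y a b t -> ~ longest_everywhere s y.
Proof.
  intros [H _ L1 L2 Y] LE.
  destruct (LE b t a (tri_cycle _ _ _ _ H) Y); lia.
Qed.

Lemma not_longest_has_parent s y : ~ longest_everywhere s y -> exists z a b t, child_via s z y a b t.
Proof.
  intros N; apply not_all_ex_not in N as [a N]; apply not_all_ex_not in N as [b N];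
    apply not_all_ex_not in N as [c N]; apply imply_to_and in N as [H N];
    apply imply_to_and in N as [E N].
  destruct (unimodular_strict_longest a b c (tri_det _ _ _ _ H)) as [L|[[L1 L2]|[L1 L2]]];
    [tauto| |].
  - destruct (child_via_of_longest s b c a (mid b c) y (tri_cycle _ _ _ _ H) eq_refl L1 L2
      (or_intror (eq_sym E))) as (a' & b' & C & _); eauto.
  - destruct (child_via_of_longest s c a b (mid c a) y (tri_cycle _ _ _ _ (tri_cycle _ _ _ _ H))
      eq_refl L1 L2 (or_introl (eq_sym E))) as (a' & b' & C & _); eauto.
Qed.

Section Triangulation.

Variable s : eset.
Hypothesis Hmid : mid_injective s.
Hypothesis Hside : one_triangle_per_side s.

Lemma tri_of_same_mid a b t p q :
  tri_of s a b t -> inE s p q -> mid a b = mid p q -> tri_of s p q t.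
Proof.
  intros H Hpq E; destruct (Hmid a b p q (tri_edge _ _ _ _ H) Hpq E) as [[<- <-]|[<- <-]];
    auto using tri_swap.
Qed.

Lemma len_of_same_mid a b p q : inE s a b -> inE s p q -> mid a b = mid p q -> len a b = len p q.
Proof.
  intros H1 H2 E; destruct (Hmid a b p q H1 H2 E) as [[<- <-]|[<- <-]]; auto using len_sym.
Qed.

Lemma apexes_opposite p q c d :
  tri_of s p q c -> tri_of s p q d -> c <> d -> det3 p q c * det3 p q d < 0.
Proof.
  intros H1 H2 N; pose proof (tri_det _ _ _ _ H1); pose proof (tri_det _ _ _ _ H2).
  assert (det3 p q c <> det3 p q d) by (intro E; apply N; eapply Hside; eauto).
  nia.
Qed.

Lemma at_most_two_apexes p q c1 c2 c3 :
  tri_of s p q c1 -> tri_of s p q c2 -> tri_of s p q c3 -> c1 = c2 \/ c1 = c3 \/ c2 = c3.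
Proof.
  intros H1 H2 H3.
  destruct (classic (c1 = c2)); auto; destruct (classic (c1 = c3)); auto;
    destruct (classic (c2 = c3)); auto.
  pose proof (apexes_opposite _ _ _ _ H1 H2 H); pose proof (apexes_opposite _ _ _ _ H1 H3 H0);
    pose proof (apexes_opposite _ _ _ _ H2 H3 H4); nia.
Qed.

Lemma child_via_apex_tri z y a b t p q :
  child_via s z y a b t -> inE s p q -> mid p q = y -> tri_of s p q a.
Proof.
  intros [H _ _ _ Y] Hpq E; apply (tri_of_same_mid b t a); auto using tri_cycle; congruence.
Qed.

Lemma parent_of_apex z z' y a b t b' t' :
  child_via s z y a b t -> child_via s z' y a b' t' -> z = z'.
Proof.
  intros [H1 E1 L1 L2 Y1] [H2 E2 L3 L4 Y2].
  destruct (Hmid b t b' t' (tri_edge_bc _ _ _ _ H1) (tri_edge_bc _ _ _ _ H2) ltac:(congruence))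
    as [[<- <-]|[<- <-]]; [congruence|].
  rewrite (len_sym b a) in L4; rewrite (len_sym t a) in L2; lia.
Qed.

Lemma apex_of_parent z x a1 b1 t1 a2 b2 t2 :
  child_via s z x a1 b1 t1 -> child_via s z x a2 b2 t2 -> a1 = a2.
Proof.
  intros [H1 E1 _ _ Y1] [H2 E2 _ _ Y2].
  destruct (tri_distinct _ _ _ _ H2) as (D1 & D2 & D3).
  destruct (Hmid a1 b1 a2 b2 (tri_edge _ _ _ _ H1) (tri_edge _ _ _ _ H2) ltac:(congruence))
    as [[? ?]|[-> ->]]; auto.
  destruct (Hmid a2 t1 b2 t2 (tri_edge_bc _ _ _ _ H1) (tri_edge_bc _ _ _ _ H2) ltac:(congruence))
    as [[? ?]|[? ?]]; congruence.
Qed.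

Lemma longest_tri_not_parent_tri p q u y z a b t :
  tri_of s p q u -> mid p q = y -> len p q > len q u -> len p q > len u p ->
  child_via s z y a b t -> u <> a.
Proof.
  intros H E L1 L2 [Ht _ M1 M2 Y] ->.
  destruct (Hmid b t p q (tri_edge_bc _ _ _ _ Ht) (tri_edge _ _ _ _ H) ltac:(congruence))
    as [[<- <-]|[<- <-]].
  - rewrite (len_sym t a) in L1; lia.
  - rewrite (len_sym b a), (len_sym t b) in *; lia.
Qed.

(* The edge [σ_y] lies in at most two triangles; when it is the longest edge of one of them,
   every parent of [y] comes from the other one. *)
Lemma parent_unique_of_longest p q u y z1 z2 a1 b1 t1 a2 b2 t2 :
  tri_of s p q u -> mid p q = y -> len p q > len q u -> len p q > len u p ->
  child_via s z1 y a1 b1 t1 -> child_via s z2 y a2 b2 t2 -> z1 = z2.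
Proof.
  intros H E L1 L2 C1 C2.
  pose proof (longest_tri_not_parent_tri _ _ _ _ _ _ _ _ H E L1 L2 C1).
  pose proof (longest_tri_not_parent_tri _ _ _ _ _ _ _ _ H E L1 L2 C2).
  assert (a1 = a2) as <-.
  { destruct (at_most_two_apexes p q u a1 a2) as [?|[?|?]]; try congruence;
      eapply child_via_apex_tri; eauto using tri_edge. }
  eapply parent_of_apex; eauto.
Qed.

Lemma at_most_two_parents y z1 z2 z3 a1 b1 t1 a2 b2 t2 a3 b3 t3 :
  child_via s z1 y a1 b1 t1 -> child_via s z2 y a2 b2 t2 -> child_via s z3 y a3 b3 t3 ->
  z1 = z2 \/ z1 = z3 \/ z2 = z3.
Proof.
  intros C1 C2 C3; pose proof (child_via_edge _ _ _ _ _ _ C1) as I.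
  destruct (at_most_two_apexes b1 t1 a1 a2 a3) as [<-|[<-|<-]];
    try (eapply child_via_apex_tri; eauto; apply (cv_child _ _ _ _ _ _ C1)).
  - left; eapply parent_of_apex; eauto.
  - right; left; eapply parent_of_apex; eauto.
  - right; right; eapply parent_of_apex; eauto.
Qed.

Lemma longer_edge_not_in_tri p q a b t : inE s p q -> len p q > len a b ->
  tri_of s a b t -> len a b > len b t -> len a b > len t a ->
  ~ (mid p q = mid a b \/ mid p q = mid b t \/ mid p q = mid t a).
Proof.
  intros Hpq L H L1 L2 [E|[E|E]];
    [pose proof (tri_edge _ _ _ _ H) as I|pose proof (tri_edge_bc _ _ _ _ H) as I
    |pose proof (tri_edge_ca _ _ _ _ H) as I];
    pose proof (len_of_same_mid _ _ _ _ Hpq I E); rewrite ?(len_sym t a) in *; lia.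
Qed.

(** * Roots *)

Definition is_root (r : lpt) : Prop := Fdec s r \/ Fdiag s r.

Lemma is_root_longest r : is_root r -> longest_everywhere s r.
Proof. unfold is_root, Fdec, Fdiag; tauto. Qed.

Lemma is_root_of_longest r : Lambda s r -> longest_everywhere s r -> is_root r.
Proof. unfold is_root, Fdec, Fdiag; destruct (classic (unit_diag_at s r)); tauto. Qed.

Lemma tnode_child_via r y z : longest_everywhere s r -> tnode s r y z ->
  exists a b t, child_via s z y a b t.
Proof.
  intros LE [a b c w H E Y|y' z' a b c w _ H E _ L1 L2 Y].
  - destruct (LE a b c H E) as [L1 L2].
    destruct (child_via_of_longest s a b c r w H E L1 L2 Y) as (a' & b' & C & _); eauto.
  - destruct (child_via_of_longest s a b c y' w H E L1 L2 Y) as (a' & b' & C & _); eauto.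
Qed.

(* A node that has a child in some tree is the longest edge of a triangle, hence has a
   unique parent; so a shared child-parent pair propagates up to a shared root. *)
Lemma tnode_root_unique r r' y z : longest_everywhere s r -> longest_everywhere s r' ->
  tnode s r y z -> tnode s r' y z -> r = r'.
Proof.
  intros LE LE' H; revert r' LE'.
  induction H as [a b c w H E Y|y z a b c w H1 IH H E N L1 L2 Y]; intros r' LE' H2;
    inversion H2 as [a' b' c' w' H' E' Y'|y' z' a' b' c' w' H1' H' E' N' L1' L2' Y']; subst.
  - reflexivity.
  - destruct (tnode_child_via _ _ _ LE' H1') as (a1 & b1 & t1 & C).
    exfalso; eapply child_not_longest; eauto.
  - destruct (tnode_child_via _ _ _ LE H1) as (a1 & b1 & t1 & C).
    exfalso; eapply child_not_longest; eauto.
  - destruct (tnode_child_via _ _ _ LE H1) as (a1 & b1 & t1 & C1).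
    destruct (tnode_child_via _ _ _ LE' H1') as (a2 & b2 & t2 & C2).
    assert (z = z') as <- by (eapply (parent_unique_of_longest a b c); eauto).
    now apply IH.
Qed.

Lemma in_tau_root_or_child r x : is_root r -> in_tau s r x ->
  x = r \/ exists z a b t, tnode s r x z /\ child_via s z x a b t.
Proof.
  intros R [E|[z H]]; auto; right.
  destruct (tnode_child_via r x z (is_root_longest _ R) H) as (a & b & t & C); eauto 10.
Qed.

Lemma tau_inv_parent x r : tau_inv s x r -> ~ is_root x ->
  exists z a b t, tnode s r x z /\ child_via s z x a b t.
Proof.
  intros [R I] N; destruct (in_tau_root_or_child r x R I) as [->|?]; [contradiction|auto].
Qed.

Lemma tau_inv_of_root x r : tau_inv s x r -> is_root x -> r = x.
Proof.
  intros [R I] Rx; destruct (in_tau_root_or_child r x R I) as [->|(z & a & b & t & _ & C)]; auto.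
  exfalso; eapply child_not_longest; eauto using is_root_longest.
Qed.

Lemma tau_inv_at_most_two x r1 r2 r3 :
  tau_inv s x r1 -> tau_inv s x r2 -> tau_inv s x r3 -> r1 = r2 \/ r1 = r3 \/ r2 = r3.
Proof.
  intros H1 H2 H3.
  destruct (classic (is_root x)) as [R|R].
  { left; rewrite (tau_inv_of_root _ _ H1 R), (tau_inv_of_root _ _ H2 R); auto. }
  destruct (tau_inv_parent x r1 H1 R) as (z1 & a1 & b1 & t1 & N1 & C1).
  destruct (tau_inv_parent x r2 H2 R) as (z2 & a2 & b2 & t2 & N2 & C2).
  destruct (tau_inv_parent x r3 H3 R) as (z3 & a3 & b3 & t3 & N3 & C3).
  pose proof (is_root_longest _ (proj1 H1)); pose proof (is_root_longest _ (proj1 H2));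
    pose proof (is_root_longest _ (proj1 H3)).
  destruct (at_most_two_parents x z1 z2 z3 a1 b1 t1 a2 b2 t2 a3 b3 t3 C1 C2 C3)
    as [<-|[<-|<-]]; [left|right; left|right; right]; eapply tnode_root_unique; eauto.
Qed.

Lemma tau_inv_unique_of_longest x p q u r r' :
  tri_of s p q u -> mid p q = x -> len p q > len q u -> len p q > len u p ->
  tau_inv s x r -> tau_inv s x r' -> r = r'.
Proof.
  intros H E L1 L2 Hr Hr'.
  destruct (classic (is_root x)) as [R|R].
  { rewrite (tau_inv_of_root _ _ Hr R), (tau_inv_of_root _ _ Hr' R); auto. }
  destruct (tau_inv_parent x r Hr R) as (z1 & a1 & b1 & t1 & N1 & C1).
  destruct (tau_inv_parent x r' Hr' R) as (z2 & a2 & b2 & t2 & N2 & C2).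
  assert (z1 = z2) as <- by (eapply (parent_unique_of_longest p q u); eauto).
  destruct Hr as [Rr _], Hr' as [Rr' _].
  eapply tnode_root_unique; eauto using is_root_longest.
Qed.

(* Edge lengths strictly increase going up, and they are bounded. *)
Lemma child_has_root z y a b t : bounded_edges s -> child_via s z y a b t ->
  exists r, is_root r /\ tnode s r y z.
Proof.
  intros [B HB] C.
  enough (Climb : forall n z y a b t, (Z.to_nat (B - len a b) < n)%nat ->
            child_via s z y a b t -> exists r, is_root r /\ tnode s r y z)
    by (eapply (Climb (S (Z.to_nat (B - len a b)))); eauto).
  clear z y a b t C; intros n; induction n as [|n IH]; intros z y a b t Hn C; [lia|].
  destruct C as [H E L1 L2 Y].
  assert (Z : Lambda s z) by (exists a, b; split; [exact (tri_edge _ _ _ _ H)|auto]).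
  destruct (classic (longest_everywhere s z)) as [LE|NLE].
  - exists z; split; [now apply is_root_of_longest|].
    apply (tn_root s z a b t y H E); auto.
  - destruct (not_longest_has_parent s z NLE) as (z2 & a2 & b2 & t2 & C2).
    pose proof C2 as [H2 E2 L3 L4 Y2].
    assert (len b2 t2 = len a b)
      by (apply len_of_same_mid; eauto using tri_edge_bc, tri_edge; congruence).
    pose proof (HB a2 b2 (tri_edge _ _ _ _ H2)).
    destruct (IH z2 z a2 b2 t2 ltac:(lia) C2) as (r & R & N).
    exists r; split; auto.
    apply (tn_step s r z z2 a b t y N H E); auto.
    rewrite <- E2; apply longer_edge_not_in_tri; [exact (tri_edge _ _ _ _ H2)|lia|auto..].
Qed.

Lemma tau_inv_nonempty x : bounded_edges s -> Lambda s x -> exists r, tau_inv s x r.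
Proof.
  intros HB HL; destruct (classic (longest_everywhere s x)) as [LE|NLE].
  - exists x; split; [apply is_root_of_longest|left]; auto.
  - destruct (not_longest_has_parent s x NLE) as (z & a & b & t & C).
    destruct (child_has_root z x a b t HB C) as (r & R & N).
    exists r; split; [auto|right; eauto].
Qed.

(** * Each tree of influence is a tree *)

Definition avoids (e : option lpt) (a b t : lpt) : Prop :=
  match e with
  | None => True
  | Some e0 => ~ (e0 = mid a b \/ e0 = mid b t \/ e0 = mid t a)
  end.

(* [subtree c e w y]: [w] is a child of [y] in the tree grown from [c] by the rule of
   [tnode], except that the children of [c] must come from a triangle avoiding the edge
   [e]; [e = Some z] describes the subtree below the node [c] of parent [z]. Unlike
   [tnode], it can be decomposed at its first step. *)
Inductive subtree (c : lpt) (e : option lpt) : lpt -> lpt -> Prop :=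
| st_root : forall a b t w, child_via s c w a b t -> avoids e a b t -> subtree c e w c
| st_step : forall y z a b t w, subtree c e y z -> child_via s y w a b t ->
    ~ (z = mid a b \/ z = mid b t \/ z = mid t a) -> subtree c e w y.

Lemma not_mid_of_same_edge z a b a' b' c : same_edge a' b' a b ->
  ~ (z = mid a b \/ z = mid b c \/ z = mid c a) -> ~ (z = mid a' b' \/ z = mid b' c \/ z = mid c a').
Proof.
  intros [[-> ->]|[-> ->]] N; auto.
  rewrite (mid_sym b a), (mid_sym a c), (mid_sym c b); tauto.
Qed.

Lemma tnode_subtree r y z : longest_everywhere s r -> tnode s r y z -> subtree r None y z.
Proof.
  intros LE H; induction H as [a b c w H E Y|y z a b c w _ IH H E N L1 L2 Y].
  - destruct (LE a b c H E) as [L1 L2].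
    destruct (child_via_of_longest s a b c r w H E L1 L2 Y) as (a' & b' & C & _).
    eapply st_root; [eauto|exact I].
  - destruct (child_via_of_longest s a b c y w H E L1 L2 Y) as (a' & b' & C & Sw).
    eapply st_step; eauto; eapply not_mid_of_same_edge; eauto.
Qed.

Lemma subtree_first_step c e w y : subtree c e w y ->
  (y = c /\ exists a b t, child_via s c w a b t /\ avoids e a b t) \/
  (exists c' a b t, child_via s c c' a b t /\ avoids e a b t /\ subtree c' (Some c) w y).
Proof.
  intros H; induction H as [a b t w C X|y z a b t w _ IH C N].
  - left; eauto 10.
  - right; destruct IH as [[-> (a0 & b0 & t0 & C0 & X0)]|(c' & a0 & b0 & t0 & C0 & X0 & G)].
    + exists y, a0, b0, t0; split; [|split]; auto; eapply st_root; eauto.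
    + exists c', a0, b0, t0; split; [|split]; auto; eapply st_step; eauto.
Qed.

Lemma apex_ne_of_avoids z y a1 b1 t1 a b t : child_via s z y a1 b1 t1 ->
  tri_of s a b t -> mid a b = y -> ~ (z = mid a b \/ z = mid b t \/ z = mid t a) -> t <> a1.
Proof.
  intros [H1 E1 _ _ Y1] H E N ->; apply N.
  destruct (Hmid b1 t1 a b (tri_edge_bc _ _ _ _ H1) (tri_edge _ _ _ _ H) ltac:(congruence))
    as [[<- <-]|[<- <-]]; rewrite <- E1; [right; right; reflexivity|right; left; apply mid_sym].
Qed.

(* [t <> a1]: the triangle of [y] is not the one it was reached through. *)
Lemma child_shadow_nested z y w a1 b1 t1 a b t :
  child_via s z y a1 b1 t1 -> child_via s y w a b t -> t <> a1 ->
  (forall p, shadow b t a p -> shadow b1 t1 a1 p) /\ len b t < len b1 t1.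
Proof.
  intros C1 [H E L1 L2 Y] Nt; pose proof C1 as [H1 _ _ _ Y1].
  assert (Emid : mid b1 t1 = mid a b) by congruence.
  pose proof (tri_of_same_mid b1 t1 a1 a b (tri_cycle _ _ _ _ H1) (tri_edge _ _ _ _ H) Emid) as Ha1.
  pose proof (apexes_opposite a b t a1 H Ha1 Nt) as S.
  split.
  - intros p Hp; pose proof (shadow_child_sub a b t a1 (tri_det _ _ _ _ H) L1 L2 ltac:(lia) p Hp).
    destruct (Hmid b1 t1 a b (tri_edge_bc _ _ _ _ H1) (tri_edge _ _ _ _ H) Emid)
      as [[<- <-]|[<- <-]]; auto using shadow_sym.
  - assert (len a b = len b1 t1)
      by (apply len_of_same_mid; eauto using tri_edge, tri_edge_bc).
    lia.
Qed.

Lemma subtree_shadow c c' a0 b0 t0 w y : child_via s c c' a0 b0 t0 ->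
  subtree c' (Some c) w y ->
  exists a b t, child_via s y w a b t /\ (forall p, shadow b t a p -> shadow b0 t0 a0 p) /\
    len b t < len b0 t0.
Proof.
  intros C0 G; induction G as [a b t w C X|y z a b t w _ IH C N].
  - exists a, b, t; split; auto.
    apply (child_shadow_nested c c' w a0 b0 t0 a b t C0 C).
    pose proof C as [H E _ _ _]; exact (apex_ne_of_avoids _ _ _ _ _ _ _ _ C0 H E X).
  - destruct IH as (a1 & b1 & t1 & C1 & R1 & L1).
    exists a, b, t; split; auto.
    pose proof C as [H E _ _ _].
    destruct (child_shadow_nested z y w a1 b1 t1 a b t C1 C
      (apex_ne_of_avoids _ _ _ _ _ _ _ _ C1 H E N)) as [R L].
    split; [auto|lia].
Qed.

(* Shadows of sibling edges meet only along their parent edge, where the only lattice points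
   are its endpoints, or (for two edges of one triangle) only at their common vertex. *)
Lemma sibling_shadows_far c c1 c2 a1 b1 t1 a2 b2 t2 p q :
  child_via s c c1 a1 b1 t1 -> child_via s c c2 a2 b2 t2 -> c1 <> c2 -> p <> q ->
  shadow b1 t1 a1 p -> shadow b1 t1 a1 q -> shadow b2 t2 a2 p -> shadow b2 t2 a2 q ->
  len a1 b1 <= len p q.
Proof.
  intros C1 C2 Nc Npq R1p R1q R2p R2q.
  pose proof C1 as [H1 E1 L11 L12 Y1]; pose proof C2 as [H2 E2 L21 L22 Y2].
  pose proof (tri_det _ _ _ _ H1) as D1.
  destruct (shadow_child_side a1 b1 t1 p D1 L11 L12 R1p) as [B1p S1p].
  destruct (shadow_child_side a1 b1 t1 q D1 L11 L12 R1q) as [B1q S1q].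
  destruct (shadow_child_side a2 b2 t2 p (tri_det _ _ _ _ H2) L21 L22 R2p) as [_ S2p].
  destruct (shadow_child_side a2 b2 t2 q (tri_det _ _ _ _ H2) L21 L22 R2q) as [_ S2q].
  destruct (Hmid a1 b1 a2 b2 (tri_edge _ _ _ _ H1) (tri_edge _ _ _ _ H2) ltac:(congruence))
    as [[<- <-]|[<- <-]].
  - destruct (classic (t1 = t2)) as [<-|Et]; [congruence|].
    pose proof (apexes_opposite a1 b1 t1 t2 H1 H2 Et) as S.
    assert (Zp : det3 a1 b1 p = 0) by (eapply zero_of_both_signs; eauto).
    assert (Zq : det3 a1 b1 q = 0) by (eapply zero_of_both_signs; eauto).
    rewrite (box_line_distinct_len a1 b1 t1 p q D1 B1p B1q Zp Zq Npq); lia.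
  - destruct (classic (t1 = t2)) as [<-|Et].
    + exfalso; apply Npq.
      pose proof (longest_apex_in_box a1 b1 t1 D1 L11 L12) as Hb.
      destruct R1p as [I1p _], R2p as [I2p _], R1q as [I1q _], R2q as [I2q _].
      rewrite (box_apex_unique a1 b1 t1 p Hb I1p), (box_apex_unique a1 b1 t1 q Hb I1q);
        auto using in_box_sym.
    + pose proof (apexes_opposite a1 b1 t1 t2 H1 (tri_swap _ _ _ _ H2) Et) as S.
      rewrite (det3_swap b1 a1 p), (det3_swap b1 a1 q), (det3_swap b1 a1 t2) in *.
      assert (Zp : det3 a1 b1 p = 0) by (eapply (zero_of_both_signs _ _ _ D1 S); nia).
      assert (Zq : det3 a1 b1 q = 0) by (eapply (zero_of_both_signs _ _ _ D1 S); nia).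
      rewrite (box_line_distinct_len a1 b1 t1 p q D1 B1p B1q Zp Zq Npq); lia.
Qed.

Lemma shadow_of_same_mid b t a b' t' : inE s b t -> inE s b' t' -> mid b t = mid b' t' ->
  shadow b t a b' /\ shadow b t a t'.
Proof.
  intros H1 H2 E; destruct (Hmid b t b' t' H1 H2 E) as [[<- <-]|[<- <-]];
    auto using shadow_left, shadow_right.
Qed.

Lemma child_not_below_sibling c y a b t c' a' b' t' z :
  child_via s c y a b t -> child_via s c c' a' b' t' -> ~ subtree c' (Some c) y z.
Proof.
  intros C C' G.
  destruct (subtree_shadow c c' a' b' t' y z C' G) as (a'' & b'' & t'' & C'' & R & L).
  assert (E : len b'' t'' = len b t)
    by (apply len_of_same_mid; eauto using child_via_edge;
        rewrite (cv_child _ _ _ _ _ _ C''), (cv_child _ _ _ _ _ _ C); auto).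
  destruct (classic (c' = y)) as [<-|Ny].
  - assert (len b'' t'' = len b' t')
      by (apply len_of_same_mid; eauto using child_via_edge;
          rewrite (cv_child _ _ _ _ _ _ C''), (cv_child _ _ _ _ _ _ C'); auto).
    lia.
  - destruct (shadow_of_same_mid b t a b'' t'') as [P1 P2]; eauto using child_via_edge.
    { rewrite (cv_child _ _ _ _ _ _ C''), (cv_child _ _ _ _ _ _ C); auto. }
    destruct (tri_distinct _ _ _ _ (cv_tri _ _ _ _ _ _ C'')) as (_ & N & _).
    pose proof (sibling_shadows_far c y c' a b t a' b' t' b'' t'' C C' (not_eq_sym Ny) N P1 P2
      (R _ (shadow_left _ _ _)) (R _ (shadow_right _ _ _))).
    pose proof (cv_longer_bt _ _ _ _ _ _ C); lia.
Qed.

(* Induction on the length of the edge of [c]: two parents of [y] either come through the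
   same child of [c] (then recurse into its shorter subtree) or through two distinct
   children, whose shadows would both contain [σ_y]. *)
Lemma subtree_parent_unique c e y z1 z2 p q : inE s p q -> mid p q = c ->
  subtree c e y z1 -> subtree c e y z2 -> z1 = z2.
Proof.
  enough (U : forall n c e y z1 z2 p q, (Z.to_nat (len p q) < n)%nat -> inE s p q -> mid p q = c ->
            subtree c e y z1 -> subtree c e y z2 -> z1 = z2)
    by (intros; eapply (U (S (Z.to_nat (len p q)))); eauto).
  clear c e y z1 z2 p q; intros n; induction n as [|n IH]; intros c e y z1 z2 p q Hn Hpq Ec G1 G2; [lia|].
  destruct (subtree_first_step c e y z1 G1)
    as [[-> (a1 & b1 & t1 & C1 & _)]|(c1 & a1 & b1 & t1 & C1 & _ & G1')],
    (subtree_first_step c e y z2 G2)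
    as [[-> (a2 & b2 & t2 & C2 & _)]|(c2 & a2 & b2 & t2 & C2 & _ & G2')].
  - reflexivity.
  - exfalso; exact (child_not_below_sibling _ _ _ _ _ _ _ _ _ _ C1 C2 G2').
  - exfalso; exact (child_not_below_sibling _ _ _ _ _ _ _ _ _ _ C2 C1 G1').
  - destruct (classic (c1 = c2)) as [<-|Nc].
    + pose proof C1 as [H1 E1 L1 _ Y1].
      assert (len a1 b1 = len p q) by (apply len_of_same_mid; eauto using tri_edge; congruence).
      apply (IH c1 (Some c) y z1 z2 b1 t1);
        [unfold len in *; lia|exact (child_via_edge _ _ _ _ _ _ C1)|auto..].
    + exfalso.
      destruct (subtree_shadow c c1 a1 b1 t1 y z1 C1 G1') as (a3 & b3 & t3 & C3 & R3 & _).
      destruct (subtree_shadow c c2 a2 b2 t2 y z2 C2 G2') as (a4 & b4 & t4 & C4 & R4 & L4).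
      destruct (shadow_of_same_mid b4 t4 a4 b3 t3) as [P1 P2]; eauto using child_via_edge.
      { rewrite (cv_child _ _ _ _ _ _ C3), (cv_child _ _ _ _ _ _ C4); auto. }
      destruct (tri_distinct _ _ _ _ (cv_tri _ _ _ _ _ _ C3)) as (_ & N & _).
      pose proof (sibling_shadows_far c c1 c2 a1 b1 t1 a2 b2 t2 b3 t3 C1 C2 Nc N
        (R3 _ (shadow_left _ _ _)) (R3 _ (shadow_right _ _ _)) (R4 _ P1) (R4 _ P2)).
      assert (len b3 t3 = len b4 t4)
        by (apply len_of_same_mid; eauto using child_via_edge;
            rewrite (cv_child _ _ _ _ _ _ C3), (cv_child _ _ _ _ _ _ C4); auto).
      assert (len a1 b1 = len a2 b2)
        by (apply len_of_same_mid; eauto using child_via_edge, tri_edge, cv_tri;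
            rewrite (cv_parent _ _ _ _ _ _ C1), (cv_parent _ _ _ _ _ _ C2); auto).
      pose proof (cv_longer_bt _ _ _ _ _ _ C2); lia.
Qed.

Lemma tnode_root_edge r y z : tnode s r y z -> exists a b, inE s a b /\ mid a b = r.
Proof. induction 1 as [a b c w H E _|]; eauto using tri_edge. Qed.

Lemma tnode_parent_unique r y z1 z2 : longest_everywhere s r ->
  tnode s r y z1 -> tnode s r y z2 -> z1 = z2.
Proof.
  intros LE H1 H2; destruct (tnode_root_edge r y z1 H1) as (a & b & Hab & E).
  apply (subtree_parent_unique r None y z1 z2 a b Hab E); auto using tnode_subtree.
Qed.

End Triangulation.

Lemma parent_through_tri s a b c x : tri_of s a b c -> mid a b = x ->
  ~ (len a b > len b c /\ len a b > len c a) -> exists z b' t', child_via s z x c b' t'.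
Proof.
  intros H E N.
  destruct (unimodular_strict_longest a b c (tri_det _ _ _ _ H)) as [L|[[L1 L2]|[L1 L2]]];
    [tauto| |].
  - exists (mid c b), b, a; constructor; [now apply tri_swap, tri_cycle|auto| | |];
      rewrite ?(len_sym c b), ?(len_sym b a), ?(len_sym a c), ?(mid_sym b a); auto; lia.
  - exists (mid c a), a, b; constructor; [now apply tri_cycle, tri_cycle|auto|lia|lia|auto].
Qed.

Lemma quad_reverse a b c d : strictly_convex_quad a c b d -> strictly_convex_quad a d b c.
Proof.
  unfold strictly_convex_quad.
  replace (det3 a d b) with (- det3 b d a) by (unfold det3; ring).
  replace (det3 d b c) with (- det3 c b d) by (unfold det3; ring).
  replace (det3 b c a) with (- det3 a c b) by (unfold det3; ring).
  replace (det3 c a d) with (- det3 d a c) by (unfold det3; ring).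
  lia.
Qed.

(** * Cardinality of the inverse tree *)

Lemma tnode_parent_cases s r w y : tnode s r w y ->
  y = r \/ exists a b c, tri_of s a b c /\ mid a b = y /\ len a b > len b c /\ len a b > len c a.
Proof. intros [a b c w' H E _|y' z a b c w' _ H E _ L1 L2 _]; [left|right; exists a, b, c]; auto. Qed.

Lemma card1_of (S : lpt -> Prop) y : S y -> (forall u v, S u -> S v -> u = v) -> card1 S.
Proof. intros Hy U; exists y; intro z; split; [intro; apply U|intros ->]; auto. Qed.

Lemma card2_of (S : lpt -> Prop) y1 y2 : S y1 -> S y2 -> y1 <> y2 ->
  (forall r1 r2 r3, S r1 -> S r2 -> S r3 -> r1 = r2 \/ r1 = r3 \/ r2 = r3) -> card2 S.
Proof.
  intros H1 H2 N T; exists y1, y2; split; [auto|intro z; split; [|intros [-> | ->]; auto]].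
  intro Hz; destruct (T y1 y2 z H1 H2 Hz) as [?|[?|?]]; auto; contradiction.
Qed.

Lemma card1_or_card2_of (S : lpt -> Prop) y : S y ->
  (forall r1 r2 r3, S r1 -> S r2 -> S r3 -> r1 = r2 \/ r1 = r3 \/ r2 = r3) -> card1 S \/ card2 S.
Proof.
  intros Hy T; destruct (classic (forall r, S r -> r = y)) as [U|U].
  - left; apply (card1_of S y Hy); intros u v Hu Hv; rewrite (U u Hu), (U v Hv); auto.
  - right; apply not_all_ex_not in U as [y' U]; apply imply_to_and in U as [Hy' N].
    exact (card2_of S y y' Hy Hy' (not_eq_sym N) T).
Qed.

Section TauInverse.

Variables (s : eset) (x : lpt).
Hypothesis Hmid : mid_injective s.
Hypothesis Hside : one_triangle_per_side s.
Hypothesis Hbnd : bounded_edges s.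
Hypothesis Hx : Lambda s x.

Lemma tau_inv_card : card1 (tau_inv s x) \/ card2 (tau_inv s x).
Proof.
  destruct (tau_inv_nonempty s Hmid x Hbnd Hx) as [r Hr].
  exact (card1_or_card2_of _ r Hr (tau_inv_at_most_two s Hmid Hside x)).
Qed.

(* A child of [x] in the tree of [u] makes [σ_x] the longest edge of a triangle, or [x = u];
   either way [x] would have a single root. *)
Lemma tau_inv_leaf u v : u <> v -> tau_inv s x u -> tau_inv s x v -> is_leaf s u x.
Proof.
  intros N Hu Hv; split; [exact (proj2 Hu)|intros [w Hw]].
  destruct (tnode_parent_cases s u w x Hw) as [Ex|(a & b & c & H & E & L1 & L2)]; apply N.
  - rewrite (tau_inv_of_root s x v Hv); [auto|rewrite Ex; exact (proj1 Hu)].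
  - exact (tau_inv_unique_of_longest s Hmid Hside x a b c u v H E L1 L2 Hu Hv).
Qed.

(* A flip that lengthens [σ_x] shows that [σ_x] is longest in neither of its triangles, so
   [x] has a parent through each of them; the tree of a single root cannot contain both. *)
Lemma tau_inv_card2_of_Finc xi : Finc xi s x -> card2 (tau_inv s x).
Proof.
  intros (a & b & c & d & _ & Em & _ & Hc & Hd & Ncd & Q & L).
  pose proof (flip_longer_not_longest a b c d (tri_det _ _ _ _ Hc) (tri_det _ _ _ _ Hd) Q L) as Nc.
  pose proof (flip_longer_not_longest a b d c (tri_det _ _ _ _ Hd) (tri_det _ _ _ _ Hc)
    (quad_reverse _ _ _ _ Q) ltac:(rewrite len_sym; lia)) as Nd.
  destruct (parent_through_tri s a b c x Hc Em Nc) as (z1 & b1 & t1 & C1).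
  destruct (parent_through_tri s a b d x Hd Em Nd) as (z2 & b2 & t2 & C2).
  destruct (child_has_root s Hmid z1 x c b1 t1 Hbnd C1) as (q1 & R1 & T1).
  destruct (child_has_root s Hmid z2 x d b2 t2 Hbnd C2) as (q2 & R2 & T2).
  apply (card2_of _ q1 q2); [split; [auto|right; eauto]..| |exact (tau_inv_at_most_two s Hmid Hside x)].
  intros <-; apply Ncd.
  assert (z1 = z2) as <- by (eapply (tnode_parent_unique s Hmid Hside q1); eauto using is_root_longest).
  exact (apex_of_parent s Hmid _ _ _ _ _ _ _ _ C1 C2).
Qed.

Lemma tau_inv_card1_of_longest :
  (exists a b c, tri_of s a b c /\ mid a b = x /\ len a b > len b c /\ len a b > len c a) ->
  card1 (tau_inv s x).
Proof.
  intros (a & b & c & H & E & L1 & L2).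
  destruct (tau_inv_nonempty s Hmid x Hbnd Hx) as [r Hr].
  apply (card1_of _ r Hr); intros u v.
  exact (tau_inv_unique_of_longest s Hmid Hside x a b c u v H E L1 L2).
Qed.

End TauInverse.

(** * Triangulations of a lattice polygon *)

Lemma pairwise_disjoint_mid_injective s : pairwise_disjoint s -> mid_injective s.
Proof.
  intros PD a b a' b' H1 H2 E; destruct (classic (same_edge a b a' b')) as [|N]; auto.
  exfalso; apply (PD a b a' b' H1 H2 N).
  exists ((IZR (fst a) + IZR (fst b)) / 2, (IZR (snd a) + IZR (snd b)) / 2)%R.
  unfold mid in E; injection E as E0 E1.
  apply (f_equal IZR) in E0, E1; rewrite !plus_IZR in E0, E1.
  split; exists (/ 2)%R; split; try lra; unfold toR; simpl; f_equal; lra.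
Qed.

Lemma parallel_scaled (u0 u1 w0 w1 : Z) : u0 * w1 - u1 * w0 = 0 ->
  (u0 * u0 + u1 * u1) * w0 = (u0 * w0 + u1 * w1) * u0 /\
  (u0 * u0 + u1 * u1) * w1 = (u0 * w0 + u1 * w1) * u1.
Proof.
  intros H; split.
  - replace ((u0 * u0 + u1 * u1) * w0) with ((u0 * w0 + u1 * w1) * u0 - u1 * (u0 * w1 - u1 * w0))
      by ring; rewrite H; ring.
  - replace ((u0 * u0 + u1 * u1) * w1) with ((u0 * w0 + u1 * w1) * u1 + u0 * (u0 * w1 - u1 * w0))
      by ring; rewrite H; ring.
Qed.

Open Scope R_scope.

Lemma segments_cross_of_parallel (P0 P1 Q0 Q1 C0 C1 D0 D1 N M : R) : N > 0 -> M > 0 ->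
  N * (D0 - C0) = M * (Q0 - P0) -> N * (D1 - C1) = M * (Q1 - P1) ->
  let h := N / (N + M) in
  0 < h < 1 /\ P0 + h * (D0 - P0) = Q0 + h * (C0 - Q0) /\ P1 + h * (D1 - P1) = Q1 + h * (C1 - Q1).
Proof.
  intros HN HM E0 E1 h; subst h; unfold Rdiv.
  assert (Hi : (N + M) * / (N + M) = 1) by (field; lra).
  assert (0 < / (N + M)) by (apply Rinv_0_lt_compat; lra).
  split; [split; nra|split].
  - assert (K : P0 + N * / (N + M) * (D0 - P0) - (Q0 + N * / (N + M) * (C0 - Q0))
                = ((P0 - Q0) * M + N * (D0 - C0)) * / (N + M)) by (field; lra).
    rewrite E0 in K; replace ((P0 - Q0) * M + M * (Q0 - P0)) with 0 in K by ring; lra.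
  - assert (K : P1 + N * / (N + M) * (D1 - P1) - (Q1 + N * / (N + M) * (C1 - Q1))
                = ((P1 - Q1) * M + N * (D1 - C1)) * / (N + M)) by (field; lra).
    rewrite E1 in K; replace ((P1 - Q1) * M + M * (Q1 - P1)) with 0 in K by ring; lra.
Qed.

Close Scope R_scope.

Lemma sq_dist_pos (p q : lpt) : p <> q ->
  0 < (fst q - fst p) * (fst q - fst p) + (snd q - snd p) * (snd q - snd p).
Proof.
  intros N; assert (H : fst q - fst p <> 0 \/ snd q - snd p <> 0).
  { destruct p, q; simpl; destruct (Z.eq_dec (z1 - z) 0), (Z.eq_dec (z2 - z0) 0); auto.
    exfalso; apply N; f_equal; lia. }
  revert H; generalize (fst q - fst p), (snd q - snd p); intros u v [H|H]; nia.
Qed.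

Lemma same_side_apexes_segments_meet (p q c d : lpt) : p <> q ->
  det3 p q c = det3 p q d ->
  0 < (fst q - fst p) * (fst d - fst c) + (snd q - snd p) * (snd d - snd c) ->
  exists z, on_open_seg (toR p) (toR d) z /\ on_open_seg (toR q) (toR c) z.
Proof.
  destruct p as [p0 p1], q as [q0 q1], c as [c0 c1], d as [d0 d1]; unfold det3; simpl.
  intros Npq E HM.
  destruct (parallel_scaled (q0 - p0) (q1 - p1) (d0 - c0) (d1 - c1) ltac:(lia)) as [I0 I1].
  set (Nz := (q0 - p0) * (q0 - p0) + (q1 - p1) * (q1 - p1)) in *.
  set (Mz := (q0 - p0) * (d0 - c0) + (q1 - p1) * (d1 - c1)) in *.
  assert (HN : Nz > 0) by (pose proof (sq_dist_pos _ _ Npq); simpl in *; lia).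
  apply (f_equal IZR) in I0, I1; rewrite !mult_IZR, !minus_IZR in I0, I1.
  assert (HN' : (IZR Nz > 0)%R) by (apply IZR_lt; lia).
  assert (HM' : (IZR Mz > 0)%R) by (apply IZR_lt; lia).
  destruct (segments_cross_of_parallel (IZR p0) (IZR p1) (IZR q0) (IZR q1) (IZR c0) (IZR c1)
    (IZR d0) (IZR d1) (IZR Nz) (IZR Mz) HN' HM' ltac:(lra) ltac:(lra)) as [Hh [X0 X1]].
  eexists; split; exists (IZR Nz / (IZR Nz + IZR Mz))%R; split; eauto;
    unfold toR; simpl; f_equal; eauto.
Qed.

Lemma pairwise_disjoint_one_triangle_per_side s : pairwise_disjoint s -> one_triangle_per_side s.
Proof.
  intros PD p q c d Hc Hd E; destruct (classic (c = d)) as [|N]; auto; exfalso.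
  destruct (tri_distinct _ _ _ _ Hc) as (Npq & _ & Ncp), (tri_distinct _ _ _ _ Hd) as (_ & _ & Ndp).
  assert (Cross : forall c d, tri_of s p q c -> tri_of s p q d -> c <> d -> c <> p ->
    det3 p q c = det3 p q d ->
    0 < (fst q - fst p) * (fst d - fst c) + (snd q - snd p) * (snd d - snd c) -> False).
  { clear c d Hc Hd E N Ncp Ndp; intros c d Hc Hd N Ncp E HM.
    apply (PD p d q c (inE_sym _ _ _ (tri_edge_ca _ _ _ _ Hd)) (tri_edge_bc _ _ _ _ Hc));
      [intros [[? ?]|[? ?]]; congruence|].
    exact (same_side_apexes_segments_meet p q c d Npq E HM). }
  destruct (Z.lt_trichotomy ((fst q - fst p) * (fst d - fst c) + (snd q - snd p) * (snd d - snd c)) 0)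
    as [HM|[HM|HM]].
  - apply (Cross d c Hd Hc (not_eq_sym N) Ndp (eq_sym E)); lia.
  - apply N; destruct p as [p0 p1], q as [q0 q1], c as [c0 c1], d as [d0 d1]; unfold det3 in E; simpl in *.
    destruct (parallel_scaled (q0 - p0) (q1 - p1) (d0 - c0) (d1 - c1) ltac:(lia)) as [I0 I1].
    pose proof (sq_dist_pos _ _ Npq) as HN; simpl in HN.
    rewrite HM, Z.mul_0_l in I0, I1; apply Z.mul_eq_0 in I0, I1.
    f_equal; lia.
  - exact (Cross c d Hc Hd N Ncp E HM).
Qed.

Lemma odd_count_changes (g : nat -> bool) (m : nat) :
  Nat.odd (length (filter (fun i => xorb (g i) (g (S i))) (seq 0 m))) = xorb (g 0%nat) (g m).
Proof.
  induction m as [|m IH]; [simpl; destruct (g 0%nat); reflexivity|].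
  rewrite seq_S, filter_app, length_app; simpl.
  destruct (xorb (g m) (g (S m))) eqn:E; simpl.
  - rewrite Nat.add_1_r, Nat.odd_succ, <- Nat.negb_odd, IH.
    destruct (g 0%nat), (g m), (g (S m)); simpl in *; congruence.
  - rewrite Nat.add_0_r, IH; destruct (g 0%nat), (g m), (g (S m)); simpl in *; congruence.
Qed.

Lemma even_count_cyclic_changes (g : nat -> bool) (n : nat) : (1 <= n)%nat ->
  Nat.odd (length (filter (fun i => xorb (g i) (g ((i + 1) mod n)%nat)) (seq 0 n))) = false.
Proof.
  intros Hn; destruct n as [|m]; [lia|].
  rewrite seq_S, filter_app, length_app; simpl ((0 + m)%nat).
  rewrite (filter_ext_in _ (fun i => xorb (g i) (g (S i)))).
  2:{ intros i Hi; apply in_seq in Hi; rewrite Nat.mod_small, Nat.add_1_r by lia; reflexivity. }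
  assert (E0 : ((m + 1) mod S m)%nat = 0%nat) by (rewrite Nat.add_1_r, Nat.Div0.mod_same; reflexivity).
  cbn [filter]; rewrite E0; destruct (xorb (g m) (g 0%nat)) eqn:E; simpl.
  - rewrite Nat.add_1_r, Nat.odd_succ, <- Nat.negb_odd, odd_count_changes.
    destruct (g 0%nat), (g m); simpl in *; congruence.
  - rewrite Nat.add_0_r, odd_count_changes; destruct (g 0%nat), (g m); simpl in *; congruence.
Qed.

Definition coord_bound (vs : list lpt) : Z :=
  fold_right (fun p m => Z.max m (Z.max (Z.abs (fst p)) (Z.abs (snd p)))) 0 vs.

Lemma coord_bound_nonneg vs : 0 <= coord_bound vs.
Proof. induction vs; simpl; lia. Qed.

Lemma coord_bound_In vs p : In p vs -> Z.abs (fst p) <= coord_bound vs /\ Z.abs (snd p) <= coord_bound vs.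
Proof.
  induction vs as [|a vs IH]; simpl; [tauto|].
  intros [->|H]; [lia|specialize (IH H); lia].
Qed.

Lemma vertex_coord_bound vs i :
  (- IZR (coord_bound vs) <= IZR (fst (vertex vs i)) <= IZR (coord_bound vs) /\
   - IZR (coord_bound vs) <= IZR (snd (vertex vs i)) <= IZR (coord_bound vs))%R.
Proof.
  assert (H : Z.abs (fst (vertex vs i)) <= coord_bound vs /\ Z.abs (snd (vertex vs i)) <= coord_bound vs).
  { unfold vertex; destruct (Nat.lt_ge_cases i (length vs)).
    - apply coord_bound_In, nth_In; auto.
    - rewrite nth_overflow by auto; simpl; pose proof (coord_bound_nonneg vs); lia. }
  rewrite <- opp_IZR; repeat split; apply IZR_le; lia.
Qed.

Open Scope R_scope.

Lemma Rltb_negb_Rleb a b : Rltb a b = negb (Rleb b a).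
Proof. unfold Rltb, Rleb; destruct (Rlt_dec a b), (Rle_dec b a); simpl; auto; lra. Qed.

Lemma Rleb_true a b : Rleb a b = true <-> a <= b.
Proof. unfold Rleb; destruct (Rle_dec a b); split; auto; discriminate. Qed.

Lemma Rltb_true a b : Rltb a b = true <-> a < b.
Proof. unfold Rltb; destruct (Rlt_dec a b); split; auto; discriminate. Qed.

Lemma crossing_abscissa_bound (M ax ay bx by_ zy : R) : -M <= ax <= M -> -M <= bx <= M ->
  (ay <= zy < by_) \/ (by_ <= zy < ay) ->
  -M <= ax + (zy - ay) * (bx - ax) / (by_ - ay) <= M.
Proof.
  intros Ha Hb Hy; assert (Hd : by_ - ay <> 0) by lra.
  set (h := (zy - ay) / (by_ - ay)).
  assert (Eh : h * (by_ - ay) = zy - ay) by (subst h; field; auto).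
  assert (Hh : 0 <= h <= 1) by (destruct Hy; split; nra).
  replace ((zy - ay) * (bx - ax) / (by_ - ay)) with (h * (bx - ax)) by (subst h; field; auto).
  split; nra.
Qed.

(* Far to the left of the polygon the ray crosses exactly the sides whose endpoints lie on
   opposite sides of the horizontal line, so the crossing number counts sign changes. *)
Lemma crossb_left_of_box (ax ay bx by_ zx zy M : R) : -M <= ax <= M -> -M <= bx <= M -> zx < -M ->
  crossb (ax, ay) (bx, by_) (zx, zy) = xorb (Rleb ay zy) (Rleb by_ zy).
Proof.
  intros Ha Hb Hz; unfold crossb; rewrite (Rltb_negb_Rleb zy by_), (Rltb_negb_Rleb zy ay).
  destruct (Rleb ay zy) eqn:E1, (Rleb by_ zy) eqn:E2; simpl; auto; apply Rltb_true.
  - apply Rleb_true in E1; unfold Rleb in E2; destruct (Rle_dec by_ zy) as [|NN]; [discriminate|].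
    pose proof (crossing_abscissa_bound M ax ay bx by_ zy Ha Hb (or_introl (conj E1 (Rnot_le_lt _ _ NN)))).
    lra.
  - apply Rleb_true in E2; unfold Rleb in E1; destruct (Rle_dec ay zy) as [|NN]; [discriminate|].
    pose proof (crossing_abscissa_bound M ax ay bx by_ zy Ha Hb (or_intror (conj E2 (Rnot_le_lt _ _ NN)))).
    lra.
Qed.

Lemma crossb_true_bounds (ax ay bx by_ zx zy M : R) : -M <= ax <= M -> -M <= bx <= M ->
  crossb (ax, ay) (bx, by_) (zx, zy) = true -> zx < M /\ ((ay <= zy < by_) \/ (by_ <= zy < ay)).
Proof.
  intros Ha Hb; unfold crossb; intro H.
  apply andb_prop in H as [H1 H2]; apply Rltb_true in H2.
  assert (Hy : (ay <= zy < by_) \/ (by_ <= zy < ay)).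
  { apply orb_prop in H1 as [H1|H1]; apply andb_prop in H1 as [P Q];
      apply Rleb_true in P; apply Rltb_true in Q; [left|right]; lra. }
  split; auto; pose proof (crossing_abscissa_bound M ax ay bx by_ zy Ha Hb Hy); lra.
Qed.

Lemma side_seg_coord_bound vs i z : side_seg vs i z ->
  -IZR (coord_bound vs) <= fst z <= IZR (coord_bound vs) /\
  -IZR (coord_bound vs) <= snd z <= IZR (coord_bound vs).
Proof.
  unfold side_seg, on_closed_seg, toR; simpl; intros (t & Ht & ->); simpl.
  destruct (vertex_coord_bound vs i) as [A0 A1], (vertex_coord_bound vs (nxt vs i)) as [B0 B1].
  split; split; nra.
Qed.

Lemma odd_crossing_coord_bound vs z : (1 <= length vs)%nat -> Nat.odd (crossing_number vs z) = true ->
  -IZR (coord_bound vs) <= fst z <= IZR (coord_bound vs) /\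
  -IZR (coord_bound vs) <= snd z <= IZR (coord_bound vs).
Proof.
  destruct z as [zx zy]; simpl; intros Hn Ho.
  assert (Hne : exists i, In i (filter (fun i => crossb (toR (vertex vs i))
                                  (toR (vertex vs (nxt vs i))) (zx, zy)) (seq 0 (length vs)))).
  { unfold crossing_number in Ho; destruct (filter _ _) as [|i l]; [discriminate|].
    exists i; simpl; auto. }
  destruct Hne as [i Hi]; apply filter_In in Hi as [_ Hc]; unfold toR in Hc.
  destruct (vertex_coord_bound vs i) as [A0 A1], (vertex_coord_bound vs (nxt vs i)) as [B0 B1].
  destruct (crossb_true_bounds _ _ _ _ _ _ _ A0 B0 Hc) as [U Y].
  split; [split; [|lra]|destruct Y; lra].
  destruct (Rle_dec (- IZR (coord_bound vs)) zx) as [|NN]; auto; apply Rnot_le_lt in NN; exfalso.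
  unfold crossing_number in Ho.
  rewrite (filter_ext_in _ (fun i => xorb (Rleb (IZR (snd (vertex vs i))) zy)
                                      (Rleb (IZR (snd (vertex vs (nxt vs i)))) zy))) in Ho.
  - unfold nxt in Ho; rewrite (even_count_cyclic_changes (fun i => Rleb (IZR (snd (vertex vs i))) zy)
      (length vs) Hn) in Ho; discriminate.
  - intros j _; destruct (vertex_coord_bound vs j) as [C0 _], (vertex_coord_bound vs (nxt vs j)) as [D0 _].
    exact (crossb_left_of_box _ _ _ _ _ _ _ C0 D0 NN).
Qed.

Close Scope R_scope.

Lemma Lambda0_coord_bound vs r : (1 <= length vs)%nat -> Lambda0 vs r ->
  Z.abs (fst r) <= coord_bound vs /\ Z.abs (snd r) <= coord_bound vs.
Proof.
  intros Hn HL.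
  assert (B : (-IZR (coord_bound vs) <= IZR (fst r) <= IZR (coord_bound vs) /\
               -IZR (coord_bound vs) <= IZR (snd r) <= IZR (coord_bound vs))%R).
  { destruct HL as [(i & _ & Hs)|Ho];
      [exact (side_seg_coord_bound vs i _ Hs)|exact (odd_crossing_coord_bound vs _ Hn Ho)]. }
  rewrite <- opp_IZR in B; destruct B as [[P0 P1] [Q0 Q1]].
  apply le_IZR in P0, P1, Q0, Q1; lia.
Qed.

Lemma lattice_polygon_bounded_edges vs xi s : lattice_polygon vs -> Omega vs xi s -> bounded_edges s.
Proof.
  intros [[Hn _] _] [[HE _] _].
  exists (4 * coord_bound vs); intros a b H.
  destruct (HE a b H) as (_ & La & Lb & _).
  pose proof (Lambda0_coord_bound vs a ltac:(lia) La).
  pose proof (Lambda0_coord_bound vs b ltac:(lia) Lb).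
  unfold len; lia.
Qed.

Theorem mainTheorem3 (vs : list lpt) (xi sigma : eset) (x : lpt) :
  lattice_polygon vs ->
  boundary_condition vs xi ->
  Omega vs xi sigma ->
  Lambda sigma x ->
  (card1 (tau_inv sigma x) \/ card2 (tau_inv sigma x)) /\
  (forall y1 y2, y1 <> y2 ->
     (forall z, tau_inv sigma x z <-> z = y1 \/ z = y2) ->
     is_leaf sigma y1 x /\ is_leaf sigma y2 x) /\
  (Finc xi sigma x -> card2 (tau_inv sigma x)) /\
  ((exists a b c, tri_of sigma a b c /\ mid a b = x /\
      (len a b > len b c)%Z /\ (len a b > len c a)%Z) ->
   card1 (tau_inv sigma x)).
Proof.
  intros HP _ HO HL.
  pose proof (lattice_polygon_bounded_edges vs xi sigma HP HO) as Hbnd.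
  destruct HO as [[_ [PD _]] _].
  pose proof (pairwise_disjoint_mid_injective sigma PD) as Hmid.
  pose proof (pairwise_disjoint_one_triangle_per_side sigma PD) as Hside.
  split; [|split; [|split]].
  - exact (tau_inv_card sigma x Hmid Hside Hbnd HL).
  - intros y1 y2 N E.
    assert (H1 : tau_inv sigma x y1) by (apply E; auto).
    assert (H2 : tau_inv sigma x y2) by (apply E; auto).
    split; [exact (tau_inv_leaf sigma x Hmid Hside y1 y2 N H1 H2)
           |exact (tau_inv_leaf sigma x Hmid Hside y2 y1 (not_eq_sym N) H2 H1)].
  - exact (tau_inv_card2_of_Finc sigma x Hmid Hside Hbnd xi).
  - exact (tau_inv_card1_of_longest sigma x Hmid Hside Hbnd HL).
Qed.
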